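(* Let $G_{\mathrm{vc}}$ be a vertex-capacitated graph with node-weighting $A_{\mathrm{vc}}$, and $G_{\mathrm{ec}}$ the corresponding directed edge-capacitated graph with node-weighting $A_{\mathrm{ec}}$. Then: (1) If there is an $h\cdot s$-length moving cut $C$ of $G_{\mathrm{vc}}$ with $\mathrm{spars}_{(h,s)}(C,A_{\mathrm{vc}})<\phi$, then there exists an $h\cdot s$-length moving cut $C'$ of $G_{\mathrm{ec}}$ with $\mathrm{spars}_{(h,s)}(C',A_{\mathrm{ec}})<3\phi$. (2) If there is an $h\cdot s$-length moving cut $C'$ of $G_{\mathrm{ec}}$ with $\mathrm{spars}_{(h,s)}(C',A_{\mathrm{ec}})<\phi$, then there exists an $h\cdot s$-length moving cut $C$ of $G_{\mathrm{vc}}$ with $\mathrm{spars}_{(h,s)}(C,A_{\mathrm{vc}})<\phi$.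
   Context: Vertex-capacitated graph: finite undirected graph with positive integer lengths $\ell$ and capacities $u$ on vertices and edges; path length sums vertex and edge lengths. Corresponding directed graph $G_{\mathrm{ec}}$: for each vertex $v$, vertices $v_{\mathrm{in}},v_{\mathrm{mid}},v_{\mathrm{out}}$ and directed edges $(v_{\mathrm{in}},v_{\mathrm{mid}}),(v_{\mathrm{mid}},v_{\mathrm{out}}),(v_{\mathrm{in}},v_{\mathrm{out}})$ of length $\ell(v)$, capacity $u(v)$; for each edge $e=\{u,v\}$, directed edges $(u_{\mathrm{out}},v_{\mathrm{in}}),(v_{\mathrm{out}},u_{\mathrm{in}})$ of length $\ell(e)$, capacity $u(e)$; $A_{\mathrm{ec}}(v_{\mathrm{mid}})=A_{\mathrm{vc}}(v)$, zero elsewhere. General notions: demand $D\ge0$ on ordered pairs; $A$-respecting: $\max\{\sum_wD(v,w),\sum_wD(w,v)\}\le A(v)$; $h$-length: $D(v,w)>0\Rightarrow\mathrm{dist}(v,w)\le h$; symmetric: $D(v,w)=D(w,v)$. An $H$-length moving cut assigns each edge (and in $G_{\mathrm{vc}}$ also each vertex) $x$ a value $C(x)\in\{0,\tfrac1H,\dots\}\cap[0,1]$; $|C|=\sum_xu(x)C(x)$; $G-C$ has lengths $\ell(x)+H\cdot C(x)$; $\mathrm{sep}_{h'}(C,D)=\sum_{(u,v):\mathrm{dist}_{G-C}(u,v)>h'}D(u,v)$; $\mathrm{spars}_{h'}(C,D)=|C|/\mathrm{sep}_{h'}(C,D)$. For an $hs$-length cut $C$, $\mathrm{spars}_{(h,s)}(C,A)=\min\mathrm{spars}_{hs}(C,D)$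 over $A$-respecting $h$-length demands $D$, which in the directed graph $G_{\mathrm{ec}}$ are additionally required to be symmetric (zero separation counts as $+\infty$). *)

From HB Require Import structures.
From mathcomp Require Import all_boot all_order all_algebra.
From mathcomp Require Import boolp classical_sets constructive_ereal reals ereal.
Set Implicit Arguments. Unset Strict Implicit. Unset Printing Implicit Defensive.
Import Order.TTheory GRing.Theory Num.Theory.
Local Open Scope ring_scope.

Section Defs.
Variable R : realType.

Definition mcut_val (H : nat) (c : R) : Prop :=
  (exists k : nat, c = k%:R / H%:R) /\ 0 <= c <= 1.

Definition demand (W : finType) (D : W -> W -> R) : Prop :=
  forall x y, 0 <= D x y.

Definition respecting (W : finType) (A : W -> R) (D : W -> W -> R) : Prop :=
  forall v, Num.max (\sum_w D v w) (\sum_w D w v) <= A v.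

Definition hlength (W : finType) (dist : W -> W -> \bar R) (h : nat)
    (D : W -> W -> R) : Prop :=
  forall v w, 0 < D v w -> (dist v w <= (h%:R)%:E)%E.

Definition symmetric_demand (W : finType) (D : W -> W -> R) : Prop :=
  forall v w, D v w = D w v.

(* sep_{h'}(C,D), where [distC] is the distance in G - C. *)
Definition sep (W : finType) (distC : W -> W -> \bar R) (h' : nat)
    (D : W -> W -> R) : R :=
  \sum_(v : W) \sum_(w : W | ((h'%:R)%:E < distC v w)%E) D v w.

Definition ratio (sizeC sepCD : R) : \bar R :=
  if sepCD == 0 then +oo%E else (sizeC / sepCD)%:E.

Definition spars_hs (W : finType) (dist distC : W -> W -> \bar R)
    (sizeC : R) (A : W -> R) (symm : bool) (h s : nat) : \bar R :=
  ereal_inf [set r | exists D : W -> W -> R,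
    [/\ demand D, respecting A D, hlength dist h D,
        (symm -> symmetric_demand D) &
        r = ratio sizeC (sep distC (h * s) D)]]%classic.

(* V : vertices, E : edges (2-element subsets of V).                  *)
Section VC.
Variables (V : finType) (E : {set {set V}}).

Definition vc_adj (x y : V) : bool := [set x; y] \in E.

Fixpoint vc_wlen (lenV : V -> R) (lenE : {set V} -> R) (v : V) (p : seq V)
    : R :=
  match p with
  | [::] => lenV v
  | w :: p' => lenV v + lenE [set v; w] + vc_wlen lenV lenE w p'
  end.

Definition vc_dist (lenV : V -> R) (lenE : {set V} -> R) (v w : V) : \bar R :=
  if v == w then 0%E else
  ereal_inf [set (vc_wlen lenV lenE v p)%:E |
               p in [set p : seq V | path vc_adj v p && (last v p == w)]]%classic.

Definition vc_mcut (H : nat) (CV : V -> R) (CE : {set V} -> R) : Prop :=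
  (forall v, mcut_val H (CV v)) /\ (forall e, e \in E -> mcut_val H (CE e)).

Definition vc_size (uV : V -> nat) (uE : {set V} -> nat)
    (CV : V -> R) (CE : {set V} -> R) : R :=
  \sum_(v : V) (uV v)%:R * CV v + \sum_(e in E) (uE e)%:R * CE e.

Definition vc_dist0 (lV : V -> nat) (lE : {set V} -> nat) : V -> V -> \bar R :=
  vc_dist (fun v => (lV v)%:R) (fun e => (lE e)%:R).

Definition vc_distC (lV : V -> nat) (lE : {set V} -> nat) (H : nat)
    (CV : V -> R) (CE : {set V} -> R) : V -> V -> \bar R :=
  vc_dist (fun v => (lV v)%:R + H%:R * CV v) (fun e => (lE e)%:R + H%:R * CE e).

Definition vc_spars (lV uV : V -> nat) (lE uE : {set V} -> nat) (A : V -> R)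
    (h s : nat) (CV : V -> R) (CE : {set V} -> R) : \bar R :=
  spars_hs (vc_dist0 lV lE) (vc_distC lV lE (h * s) CV CE)
    (vc_size uV uE CV CE) A false h s.

End VC.

Section Directed.
Variables (W : finType) (arc : rel W).

Fixpoint d_wlen (len : W -> W -> R) (x : W) (p : seq W) : R :=
  match p with
  | [::] => 0
  | y :: p' => len x y + d_wlen len y p'
  end.

Definition d_dist (len : W -> W -> R) (x y : W) : \bar R :=
  ereal_inf [set (d_wlen len x p)%:E |
               p in [set p : seq W | path arc x p && (last x p == y)]]%classic.

Definition d_mcut (H : nat) (C : W -> W -> R) : Prop :=
  forall x y, arc x y -> mcut_val H (C x y).

Definition d_size (u : W -> W -> nat) (C : W -> W -> R) : R :=
  \sum_(x : W) \sum_(y : W | arc x y) (u x y)%:R * C x y.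

(* spars_{(h,s)}(C, A) in the directed graph: demands must be symmetric *)
Definition d_spars (l u : W -> W -> nat) (A : W -> R) (h s : nat)
    (C : W -> W -> R) : \bar R :=
  spars_hs (d_dist (fun x y => (l x y)%:R))
    (d_dist (fun x y => (l x y)%:R + (h * s)%:R * C x y))
    (d_size u C) A true h s.

End Directed.

(* Vertex (v, i) with i = 0, 1, 2 stands for v_in, v_mid, v_out.       *)
Section EC.
Variables (V : finType) (E : {set {set V}}).

Definition ec_arc : rel (V * 'I_3) := fun x y =>
  ((x.1 == y.1) &&
     [|| (x.2 == 0 :> nat) && (y.2 == 1 :> nat),
         (x.2 == 1 :> nat) && (y.2 == 2 :> nat)
       | (x.2 == 0 :> nat) && (y.2 == 2 :> nat)])
  || [&& (x.2 == 2 :> nat), (y.2 == 0 :> nat) & [set x.1; y.1] \in E].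

Definition ec_fun (fV : V -> nat) (fE : {set V} -> nat) (x y : V * 'I_3)
    : nat :=
  if x.1 == y.1 then fV x.1 else fE [set x.1; y.1].

Definition ec_weight (A : V -> R) (x : V * 'I_3) : R :=
  if (x.2 == 1 :> nat) then A x.1 else 0.

End EC.

End Defs.

(* A moving cut of G_vc lifts to G_ec by giving the three arcs inside v the
   value C(v) and the two arcs of e the value C(e); every vertex is then paid
   three times and every edge twice, so the size grows by a factor at most 3.
   Conversely, a cut C' of G_ec projects to G_vc by taking at each vertex (edge)
   the maximum of C' over its arcs, which does not increase the size.  Under the
   lift, dist(v, w) in G_vc - C equals dist(v_mid, w_mid) in G_ec - C': a walk
   pays l(v) once at each vertex it visits, through v_in -> v_out in the
   interior and through v_in -> v_mid or v_mid -> v_out at its ends.  Under the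
   projection, dist(v_mid, w_mid) can only grow when passing to G_vc.  Demands
   live on the mid copies, the only vertices of positive weight.  A demand of
   G_vc must first be symmetrized, since G_ec only admits symmetric demands;
   this preserves admissibility and, distances in G_vc being symmetric,
   separation. *)

From Pilot Require Import Defs.
From HB Require Import structures.
From mathcomp Require Import all_boot all_order all_algebra.
From mathcomp Require Import boolp classical_sets constructive_ereal reals ereal.
From mathcomp Require Import lra ring.
Import Order.TTheory GRing.Theory Num.Theory.
Local Open Scope ring_scope.

Set Implicit Arguments. Unset Strict Implicit. Unset Printing Implicit Defensive.

Section MovingCutValues.
Variables (R : realType) (H : nat).

Lemma mcut_val_ge0 (c : R) : mcut_val H c -> 0 <= c.
Proof. by case=> _ /andP[]. Qed.

Lemma mcut_val0 : mcut_val H (0 : R).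
Proof. by split; [exists 0%N; rewrite mul0r | rewrite lexx ler01]. Qed.

Lemma mcut_val_max (a b : R) :
  mcut_val H a -> mcut_val H b -> mcut_val H (Num.max a b).
Proof. by rewrite /Order.max; case: ifP. Qed.

End MovingCutValues.

Lemma ler_sum_term (R : realType) (I : finType) (P : pred I) (F : I -> R) i :
  P i -> (forall j, P j -> 0 <= F j) -> F i <= \sum_(j | P j) F j.
Proof.
by move=> Pi F_ge0; rewrite (bigD1 i) //= lerDl sumr_ge0 // => j /andP[/F_ge0].
Qed.

Section Demands.
Variables (R : realType) (T : finType).
Implicit Types (D : T -> T -> R) (dist : T -> T -> \bar R).

Definition sym_demand D : T -> T -> R := fun v w => (D v w + D w v) / 2.

Lemma sep_ge0 dist h D : demand D -> 0 <= sep dist h D.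
Proof. by move=> hD; do 2!apply: sumr_ge0 => ? _. Qed.

Lemma le_sep (dist1 dist2 : T -> T -> \bar R) h D :
  demand D -> (forall v w, (dist1 v w <= dist2 v w)%E) ->
  sep dist1 h D <= sep dist2 h D.
Proof.
move=> hD hdist; apply: ler_sum => v _; rewrite !(big_mkcond (fun w => _ < _)%E).
apply: ler_sum => w _; case: ifP => [/lt_le_trans/(_ (hdist v w)) -> //|_].
by case: ifP.
Qed.

Lemma hlength_le (dist1 dist2 : T -> T -> \bar R) h D :
  (forall v w, (dist1 v w <= dist2 v w)%E) ->
  hlength dist2 h D -> hlength dist1 h D.
Proof. by move=> hdist hD v w /hD; apply: le_trans. Qed.

Lemma demand_sym D : demand D -> demand (sym_demand D).
Proof. by move=> hD v w; rewrite divr_ge0 ?addr_ge0. Qed.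

Lemma symmetric_sym_demand D : symmetric_demand (sym_demand D).
Proof. by move=> v w; rewrite /sym_demand addrC. Qed.

Lemma respecting_sym (A : T -> R) D :
  respecting A D -> respecting A (sym_demand D).
Proof.
move=> hA v; rewrite /sym_demand -!mulr_suml !big_split /=.
by have := hA v; rewrite !ge_max => /andP[? ?]; apply/andP; split; lra.
Qed.

Lemma hlength_sym dist h D : (forall v w, dist v w = dist w v) ->
  demand D -> hlength dist h D -> hlength dist h (sym_demand D).
Proof.
move=> dist_sym hD hlen v w; rewrite /sym_demand => hvw.
have [/hlen //|Dvw] := ltrP 0 (D v w).
by rewrite dist_sym; apply: hlen; have := hD v w; have := hD w v; lra.
Qed.

Lemma sep_sym dist h D : (forall v w, dist v w = dist w v) ->
  sep dist h (sym_demand D) = sep dist h D.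
Proof.
move=> dist_sym; rewrite /sep /sym_demand.
under eq_bigr => v _ do rewrite -mulr_suml big_split /=.
rewrite -mulr_suml big_split /= (exchange_big_dep xpredT) //=.
under [X in (_ + X) / 2]eq_bigr => w _ do under eq_bigl => v do rewrite dist_sym.
by field.
Qed.

Lemma spars_hs_le_ratio dist distC sizeC (A : T -> R) (symm : bool) h s D :
  demand D -> respecting A D -> hlength dist h D -> (symm -> symmetric_demand D) ->
  (spars_hs dist distC sizeC A symm h s <= Defs.ratio sizeC (sep distC (h * s) D))%E.
Proof. by move=> *; apply: ereal_inf_lbound; exists D. Qed.

Lemma spars_hs_lt_demand dist distC sizeC (A : T -> R) (symm : bool) h s (phi : R) :
  (spars_hs dist distC sizeC A symm h s < phi%:E)%E ->
  exists2 D, [/\ demand D, respecting A D, hlength dist h D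
                & (symm -> symmetric_demand D)]
    & 0 < sep distC (h * s) D /\ sizeC / sep distC (h * s) D < phi.
Proof.
case/ereal_inf_lt => _ [D [hD hresp hlen hsym ->]]; rewrite /Defs.ratio.
case: eqP => [_|/eqP sep_neq0]; first by rewrite ltNge leey.
by rewrite lte_fin => hphi; exists D; split; rewrite // lt_def sep_neq0 sep_ge0.
Qed.

End Demands.

Lemma ratio_lt_scale (R : realType) (k sz sz' sp sp' phi : R) :
  0 < k -> 0 <= sz' -> sz' <= k * sz -> 0 < sp -> sp <= sp' ->
  sz / sp < phi -> (Defs.ratio sz' sp' < (k * phi)%:E)%E.
Proof.
move=> k_gt0 sz'_ge0 hsz sp_gt0 hsp hphi.
have sp'_gt0 : 0 < sp' := lt_le_trans sp_gt0 hsp.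
rewrite /Defs.ratio gt_eqF // lte_fin.
have shrink_sep : sz' / sp' <= sz' / sp by rewrite ler_wpM2l // lef_pV2.
have grow_size : sz' / sp <= k * sz / sp.
  by apply: ler_wpM2r; rewrite // invr_ge0 ltW.
have scale_phi : k * sz / sp < k * phi by rewrite -mulrA ltr_pM2l.
exact: le_lt_trans (le_trans shrink_sep grow_size) scale_phi.
Qed.

Section VertexCapacitatedWalks.
Variables (R : realType) (V : finType) (E : {set {set V}}).
Implicit Types (a : V -> R) (b : {set V} -> R).

Lemma vc_adj_sym : symmetric (vc_adj E).
Proof. by move=> x y; rewrite /vc_adj finset.setUC. Qed.

Lemma vc_wlen_rcons a b v p z :
  vc_wlen a b v (rcons p z) = vc_wlen a b v p + b [set last v p; z] + a z.
Proof. by elim: p v => [|y p IH] v //=; rewrite IH !addrA. Qed.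

Lemma last_rev_belast (v : V) p : last (last v p) (rev (belast v p)) = v.
Proof. by case: p => //= y p; rewrite rev_cons last_rcons. Qed.

Lemma vc_wlen_rev a b v p :
  vc_wlen a b (last v p) (rev (belast v p)) = vc_wlen a b v p.
Proof.
elim: p v => [|y p IH] v //=.
by rewrite rev_cons vc_wlen_rcons IH last_rev_belast [[set y; v]]finset.setUC; ring.
Qed.

Lemma vc_dist_sym a b v w : vc_dist E a b v w = vc_dist E a b w v.
Proof.
wlog suff: v w / (vc_dist E a b w v <= vc_dist E a b v w)%E.
  by move=> le_dist; apply/eqP; rewrite eq_le !le_dist.
rewrite /vc_dist eq_sym; case: eqP => // _.
apply/ereal_infP => _ [p /andP[vp /eqP <-] <-]; apply: ereal_inf_lbound.
exists (rev (belast v p)); last by rewrite vc_wlen_rev.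
rewrite /= rev_path last_rev_belast eqxx andbT.
by rewrite (eq_path (e' := vc_adj E)) // => x y; rewrite vc_adj_sym.
Qed.

Lemma vc_size_ge0 (uV : V -> nat) (uE : {set V} -> nat) (CV : V -> R) CE :
  (forall v, 0 <= CV v) -> (forall e, e \in E -> 0 <= CE e) ->
  0 <= vc_size E uV uE CV CE.
Proof.
move=> CV_ge0 CE_ge0.
by rewrite addr_ge0 //; apply: sumr_ge0 => x hx; rewrite mulr_ge0 ?CV_ge0 ?CE_ge0.
Qed.

End VertexCapacitatedWalks.

Section DirectedWalks.
Variables (R : realType) (W : finType) (arc : rel W).
Implicit Types (len : W -> W -> R).

Lemma d_dist_le0 len x : (d_dist arc len x x <= 0)%E.
Proof. by apply: ereal_inf_lbound; exists [::]; rewrite //= eqxx. Qed.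

Lemma d_wlen_ge0 len x p : (forall y z, arc y z -> 0 <= len y z) ->
  path arc x p -> 0 <= d_wlen len x p.
Proof.
move=> len_ge0; elim: p x => [|y p IH] x //= /andP[xy yp].
by rewrite addr_ge0 ?len_ge0 ?IH.
Qed.

Lemma d_dist_ge0 len x y : (forall y z, arc y z -> 0 <= len y z) ->
  (0 <= d_dist arc len x y)%E.
Proof.
move=> len_ge0; apply/ereal_infP => _ [p /andP[xp _] <-].
by rewrite lee_fin d_wlen_ge0.
Qed.

Lemma d_size_ge0 (u : W -> W -> nat) (C : W -> W -> R) :
  (forall x y, arc x y -> 0 <= C x y) -> 0 <= d_size arc u C.
Proof. by move=> C_ge0; do 2!apply: sumr_ge0 => ? ?; rewrite mulr_ge0 ?C_ge0. Qed.

End DirectedWalks.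

Definition ec_in : 'I_3 := @Ordinal 3 0 isT.
Definition ec_mid : 'I_3 := @Ordinal 3 1 isT.
Definition ec_out : 'I_3 := @Ordinal 3 2 isT.

Section EdgeCapacitatedGraph.
Variables (R : realType) (V : finType) (E : {set {set V}}).
Hypothesis edge_card2 : forall e, e \in E -> #|e| = 2%N.
Local Notation W := (V * 'I_3)%type.
Implicit Types (a : V -> R) (b : {set V} -> R).

Definition ec_lift a b (x y : W) : R :=
  if x.1 == y.1 then a x.1 else b [set x.1; y.1].

Lemma ec_fun_liftE (fV : V -> nat) (fE : {set V} -> nat) x y :
  (ec_fun fV fE x y)%:R = ec_lift (fun v => (fV v)%:R) (fun e => (fE e)%:R) x y.
Proof. by rewrite /ec_fun /ec_lift; case: ifP. Qed.

Lemma ec_liftDM a b a' b' (k : R) x y :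
  ec_lift (fun v => a v + k * a' v) (fun e => b e + k * b' e) x y =
  ec_lift a b x y + k * ec_lift a' b' x y.
Proof. by rewrite /ec_lift; case: ifP. Qed.

Lemma edge_neq u z : [set u; z] \in E -> u != z.
Proof.
move=> /edge_card2 card2; apply/eqP => uz.
by move: card2; rewrite uz finset.setUid cards1.
Qed.

Lemma ec_lift_inner a b u i j : ec_lift a b (u, i) (u, j) = a u.
Proof. by rewrite /ec_lift eqxx. Qed.

Lemma ec_lift_edge a b u z i j :
  [set u; z] \in E -> ec_lift a b (u, i) (z, j) = b [set u; z].
Proof. by move=> /edge_neq uz; rewrite /ec_lift (negbTE uz). Qed.

Lemma ec_arcP u z i j : ec_arc E (u, i) (z, j) ->
  [\/ [/\ u = z, i = ec_in & j = ec_mid], [/\ u = z, i = ec_mid & j = ec_out],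
      [/\ u = z, i = ec_in & j = ec_out]
    | [/\ i = ec_out, j = ec_in & [set u; z] \in E]].
Proof.
rewrite /ec_arc /=; case/orP => [/andP[/eqP-> /or3P[]] | /and3P[/eqP i2 /eqP j0 uz]].
- by case/andP => /eqP i0 /eqP j1; apply: Or41; split => //; apply: val_inj.
- by case/andP => /eqP i1 /eqP j2; apply: Or42; split => //; apply: val_inj.
- by case/andP => /eqP i0 /eqP j2; apply: Or43; split => //; apply: val_inj.
by apply: Or44; split => //; apply: val_inj.
Qed.

Lemma ec_arc_in_mid u : ec_arc E (u, ec_in) (u, ec_mid).
Proof. by rewrite /ec_arc /= eqxx. Qed.

Lemma ec_arc_mid_out u : ec_arc E (u, ec_mid) (u, ec_out).
Proof. by rewrite /ec_arc /= eqxx. Qed.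

Lemma ec_arc_in_out u : ec_arc E (u, ec_in) (u, ec_out).
Proof. by rewrite /ec_arc /= eqxx. Qed.

Lemma ec_arc_edge u z : [set u; z] \in E -> ec_arc E (u, ec_out) (z, ec_in).
Proof. by move=> uz; rewrite /ec_arc /= uz orbT. Qed.

Section LiftedLengths.
Variables (a : V -> R) (b : {set V} -> R).
Hypotheses (a_ge0 : forall v, 0 <= a v) (b_ge0 : forall e, e \in E -> 0 <= b e).

Lemma ec_lift_ge0 x y : ec_arc E x y -> 0 <= ec_lift a b x y.
Proof.
case: x y => [u i] [z j] /ec_arcP[[<- _ _]|[<- _ _]|[<- _ _]|[_ _ uz]];
  by rewrite ?ec_lift_inner ?ec_lift_edge ?b_ge0.
Qed.

(* The length of the first vertex [x.1] of the undirected walk is covered by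
   the arc leaving [x] inside [x.1]; the correction term pays for it when there
   is no such arc, i.e. when [x] is an out-copy or the walk is empty. *)
Lemma ec_walk_to_vc_walk w q x :
  path (ec_arc E) x q -> last x q = (w, ec_mid) ->
  exists p, [/\ path (vc_adj E) x.1 p, last x.1 p = w &
    vc_wlen a b x.1 p <= d_wlen (ec_lift a b) x q +
      (if (x.2 == ec_in) || (x.2 == ec_mid) && (q != [::]) then 0 else a x.1)].
Proof.
elim: q x => [|y q IH] [u i] /=.
  by move=> _ [-> ->]; exists [::]; rewrite /= add0r.
case/andP => xy yq /(IH _ yq) [p [up pw hp]].
case: y xy yq up pw hp => z j /ec_arcP
  [[<- -> ->]|[<- -> ->]|[<- -> ->]|[-> -> uz]] _ /= up pw hp.
- exists p; split => //; move: hp; rewrite ec_lift_inner.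
  by case: ifP => _; have := a_ge0 u; lra.
- by exists p; split => //; move: hp; rewrite ec_lift_inner; lra.
- by exists p; split => //; move: hp; rewrite ec_lift_inner; lra.
exists (z :: p); split => //=; first by rewrite /vc_adj uz.
by move: hp; rewrite ec_lift_edge //; lra.
Qed.

Lemma vc_dist_le_ec_dist v w :
  (vc_dist E a b v w <= d_dist (ec_arc E) (ec_lift a b) (v, ec_mid) (w, ec_mid))%E.
Proof.
rewrite /vc_dist; case: eqVneq => [_|vw]; first exact: d_dist_ge0 ec_lift_ge0.
apply/ereal_infP => _ [q /andP[vq /eqP qw] <-].
have [p [vp pw hp]] := ec_walk_to_vc_walk vq qw.
have q_neq0 : q != [::] by case: q {vq hp} qw => // -[vw']; rewrite vw' eqxx in vw.
apply: ge_ereal_inf; exists (vc_wlen a b v p)%:E; first by exists p; rewrite //= vp pw eqxx.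
by move: hp; rewrite /= q_neq0 addr0.
Qed.

End LiftedLengths.

Fixpoint ec_walk_of (x : V) (p : seq V) : seq W :=
  if p is y :: p' then (x, ec_out) :: (y, ec_in) :: ec_walk_of y p'
  else [:: (x, ec_mid)].

Lemma ec_walk_of_path x p :
  path (vc_adj E) x p -> path (ec_arc E) (x, ec_in) (ec_walk_of x p).
Proof.
elim: p x => [|y p IH] x /=; first by rewrite ec_arc_in_mid.
by case/andP => xy yp; rewrite ec_arc_in_out ec_arc_edge ?IH.
Qed.

Lemma ec_walk_of_last x p : last (x, ec_in) (ec_walk_of x p) = (last x p, ec_mid).
Proof. by elim: p x => [|y p IH] x //=. Qed.

Section BoundedLengths.
Variables (a : V -> R) (b : {set V} -> R) (len : W -> W -> R).
Hypothesis len_le : forall x y, ec_arc E x y -> len x y <= ec_lift a b x y.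

Lemma d_wlen_ec_walk_of x p : path (vc_adj E) x p ->
  d_wlen len (x, ec_in) (ec_walk_of x p) <= vc_wlen a b x p.
Proof.
elim: p x => [|y p IH] x /=.
  by move=> _; rewrite addr0 -(ec_lift_inner a b x ec_in ec_mid) len_le ?ec_arc_in_mid.
case/andP => xy /IH; have := len_le (ec_arc_in_out x); have := len_le (ec_arc_edge xy).
by rewrite ec_lift_inner ec_lift_edge //; lra.
Qed.

Lemma ec_dist_le_vc_dist v w :
  (d_dist (ec_arc E) len (v, ec_mid) (w, ec_mid) <= vc_dist E a b v w)%E.
Proof.
rewrite /vc_dist; case: eqVneq => [->|vw]; first exact: d_dist_le0.
apply/ereal_infP => _ [[|y p] /andP[/= vp /eqP pw] <-]; first by rewrite pw eqxx in vw.
case/andP: vp => vy yp; set q := (v, ec_out) :: (y, ec_in) :: ec_walk_of y p.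
apply: ge_ereal_inf; exists (d_wlen len (v, ec_mid) q)%:E.
  exists q; rewrite //= ec_arc_mid_out ec_arc_edge // ec_walk_of_path //=.
  by rewrite ec_walk_of_last pw eqxx.
rewrite lee_fin /=.
have := d_wlen_ec_walk_of yp; have := len_le (ec_arc_mid_out v).
have := len_le (ec_arc_edge vy); rewrite ec_lift_inner ec_lift_edge //; lra.
Qed.

End BoundedLengths.

Lemma vc_dist_ec_lift a b v w : (forall v, 0 <= a v) -> (forall e, e \in E -> 0 <= b e) ->
  vc_dist E a b v w = d_dist (ec_arc E) (ec_lift a b) (v, ec_mid) (w, ec_mid).
Proof.
move=> a_ge0 b_ge0; apply/eqP; rewrite eq_le vc_dist_le_ec_dist //.
exact: ec_dist_le_vc_dist.
Qed.

End EdgeCapacitatedGraph.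

Section Sums.
Variables (R : realType) (V : finType) (E : {set {set V}}).
Hypothesis edge_card2 : forall e, e \in E -> #|e| = 2%N.
Local Notation W := (V * 'I_3)%type.

Lemma sum_ec_vertices (f : W -> R) :
  \sum_x f x = \sum_v (f (v, ec_in) + f (v, ec_mid) + f (v, ec_out)).
Proof.
transitivity (\sum_v \sum_j f (v, j)).
  by rewrite (pair_bigA _ (fun v j => f (v, j))); apply: eq_bigr => -[].
apply: eq_bigr => v _; rewrite !big_ord_recl big_ord0 addr0 addrA.
by congr (f (v, _) + f (v, _) + f (v, _)); apply: val_inj.
Qed.

Lemma sum_ec_mid (f : W -> R) :
  (forall x, x.2 != ec_mid -> f x = 0) -> \sum_x f x = \sum_v f (v, ec_mid).
Proof.
move=> f_eq0; rewrite sum_ec_vertices; apply: eq_bigr => v _.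
by rewrite (f_eq0 (v, ec_in)) ?(f_eq0 (v, ec_out)) // add0r addr0.
Qed.

Lemma sum_if_eq (u : V) (c : V -> R) : \sum_z (if u == z then c z else 0) = c u.
Proof. by rewrite -big_mkcond (eq_bigl (eq_op^~ u)) ?big_pred1_eq // => z; rewrite eq_sym. Qed.

Lemma ec_arc_sum (F : W -> W -> R) :
  \sum_x \sum_(y | ec_arc E x y) F x y =
  \sum_u (F (u, ec_in) (u, ec_mid) + F (u, ec_mid) (u, ec_out) + F (u, ec_in) (u, ec_out))
  + \sum_u \sum_(z | [set u; z] \in E) F (u, ec_out) (z, ec_in).
Proof.
rewrite -big_split sum_ec_vertices; apply: eq_bigr => u _.
rewrite !(big_mkcond (ec_arc E _)) !sum_ec_vertices -!big_split /=.
under eq_bigr => z _ do rewrite /ec_arc /= ?andbT ?andbF ?orbF /= ?orbF ?addr0 ?add0r.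
by rewrite !big_split /= !sum_if_eq -big_mkcond /=; ring.
Qed.

Lemma edge_partition (F : V * V -> R) :
  \sum_u \sum_(z | [set u; z] \in E) F (u, z) =
  \sum_(e in E) \sum_(p : V * V | [set p.1; p.2] == e) F p.
Proof.
rewrite (pair_big_dep xpredT (fun u z => [set u; z] \in E) (fun u z => F (u, z))) /=.
rewrite (partition_big (fun p : V * V => [set p.1; p.2]) (mem E)) //.
apply: eq_bigr => e eE; apply: eq_big => [p|[u z] _ //].
by case: eqP => [->|]; rewrite ?andbF ?andbT.
Qed.

Lemma card_edge_pairs e : e \in E -> (#|[set p : V * V | [set p.1; p.2] == e]| <= 2)%N.
Proof.
move=> eE; rewrite -(edge_card2 eE) -(card_in_imset (f := fst)); last first.
  move=> [u z] [u' z']; rewrite !inE /= => /eqP uz_e /eqP u'z'_e eu; subst u'.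
  have : z \in [set u; z'] by rewrite u'z'_e -uz_e !inE eqxx orbT.
  rewrite !inE => /orP[/eqP zu|/eqP -> //].
  by move: (edge_card2 eE); rewrite -uz_e zu finset.setUid cards1.
apply: subset_leq_card; apply/fintype.subsetP => x /imsetP[[u z]].
by rewrite inE /= => /eqP <- ->; rewrite !inE eqxx.
Qed.

Lemma edge_sum_le (G : {set V} -> R) : (forall e, e \in E -> 0 <= G e) ->
  \sum_u \sum_(z | [set u; z] \in E) G [set u; z] <= 2 * \sum_(e in E) G e.
Proof.
move=> G_ge0; rewrite (edge_partition (fun p => G [set p.1; p.2])) mulr_sumr.
apply: ler_sum => e eE; rewrite (eq_bigr (fun=> G e)); last by move=> p /eqP ->.
rewrite (eq_bigl (mem [set p : V * V | [set p.1; p.2] == e])); last first.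
  by move=> p; rewrite /= finset.in_set.
rewrite sumr_const -[G e *+ _]mulr_natl ler_wpM2r ?G_ge0 // ler_nat.
exact: card_edge_pairs.
Qed.

End Sums.

Section LiftedDemands.
Variables (R : realType) (V : finType).
Local Notation W := (V * 'I_3)%type.
Implicit Types (D : V -> V -> R) (A : V -> R).

Lemma ec_weightE A x : ec_weight A x = if x.2 == ec_mid then A x.1 else 0.
Proof. by []. Qed.

Definition ec_demand D (x y : W) : R :=
  if (x.2 == ec_mid) && (y.2 == ec_mid) then D x.1 y.1 else 0.

Lemma demand_ec_demand D : demand D -> demand (ec_demand D).
Proof. by move=> hD x y; rewrite /ec_demand; case: ifP. Qed.

Lemma symmetric_ec_demand D :
  symmetric_demand D -> symmetric_demand (ec_demand D).
Proof. by move=> hD x y; rewrite /ec_demand andbC hD. Qed.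

Lemma ec_demand_row D x :
  \sum_y ec_demand D x y = if x.2 == ec_mid then \sum_w D x.1 w else 0.
Proof.
case: x => u i; rewrite /ec_demand /=; case: (i == ec_mid); last by rewrite big1.
by rewrite sum_ec_mid // => y /negbTE ->.
Qed.

Lemma ec_demand_col D y :
  \sum_x ec_demand D x y = if y.2 == ec_mid then \sum_v D v y.1 else 0.
Proof.
case: y => w j; rewrite /ec_demand /=.
case: (j == ec_mid); last by rewrite big1 // => x; rewrite andbF.
by rewrite sum_ec_mid // => x /negbTE ->.
Qed.

Lemma respecting_ec_demand A D :
  respecting (ec_weight A) (ec_demand D) <-> respecting A D.
Proof.
split => [hD v | hD [v i]].
  by have := hD (v, ec_mid); rewrite ec_demand_row ec_demand_col.
rewrite ec_demand_row ec_demand_col ec_weightE /=.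
by case: (i == ec_mid); rewrite ?hD // maxxx.
Qed.

Lemma hlength_ec_demand (dist : W -> W -> \bar R) h D :
  hlength dist h (ec_demand D) <->
  hlength (fun v w => dist (v, ec_mid) (w, ec_mid)) h D.
Proof.
split => [hD v w Dvw | hD [v i] [w j]]; first exact: hD.
rewrite /ec_demand /=; case: eqP => [->|_]; case: eqP => [->|_]; rewrite /= ?ltxx //.
exact: hD.
Qed.

Lemma sep_ec_demand (distC : W -> W -> \bar R) H D :
  sep distC H (ec_demand D) = sep (fun v w => distC (v, ec_mid) (w, ec_mid)) H D.
Proof.
rewrite /sep sum_ec_mid => [|x x_mid]; last first.
  by rewrite big1 // => y _; rewrite /ec_demand (negbTE x_mid).
apply: eq_bigr => v _; rewrite big_mkcond [RHS]big_mkcond sum_ec_mid //= => y y_mid.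
by rewrite /ec_demand (negbTE y_mid) andbF; case: ifP.
Qed.

Lemma ec_demandE A (D' : W -> W -> R) :
  demand D' -> respecting (ec_weight A) D' ->
  D' = ec_demand (fun v w => D' (v, ec_mid) (w, ec_mid)).
Proof.
move=> hD' hresp; have outside_mid_eq0 z : z.2 != ec_mid ->
    \sum_y D' z y <= 0 /\ \sum_y D' y z <= 0.
  by move=> z_mid; have := hresp z; rewrite ec_weightE (negbTE z_mid) ge_max => /andP.
apply: funext => x; apply: funext => y; rewrite /ec_demand.
case: (eqVneq x.2 ec_mid) => [x_mid|/outside_mid_eq0[row_le0 _]]; last first.
  by apply/eqP; rewrite eq_le hD' (le_trans (ler_sum_term isT (fun j _ => hD' x j)) row_le0).
case: (eqVneq y.2 ec_mid) => [y_mid|/outside_mid_eq0[_ col_le0]]; last first.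
  by apply/eqP; rewrite eq_le hD' (le_trans (ler_sum_term isT (fun j _ => hD' j y)) col_le0).
by case: x y x_mid y_mid => [v i] [w j] /= -> ->.
Qed.

End LiftedDemands.

Section CutTransfer.
Variables (R : realType) (V : finType) (E : {set {set V}}).
Hypothesis edge_card2 : forall e, e \in E -> #|e| = 2%N.
Local Notation W := (V * 'I_3)%type.
Implicit Types (CV : V -> R) (CE : {set V} -> R) (C : W -> W -> R).

Lemma ec_lift_mcut H CV CE :
  vc_mcut E H CV CE -> d_mcut (ec_arc E) H (ec_lift CV CE).
Proof.
case=> CV_ok CE_ok [u i] [z j] /ec_arcP[[<- _ _]|[<- _ _]|[<- _ _]|[_ _ uz]].
all: rewrite ?ec_lift_inner ?(ec_lift_edge edge_card2) //; by [apply: CV_ok | apply: CE_ok].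
Qed.

Lemma d_size_ec_lift_le (uV : V -> nat) (uE : {set V} -> nat) CV CE :
  (forall e, e \in E -> 0 <= CE e) ->
  d_size (ec_arc E) (ec_fun uV uE) (ec_lift CV CE) <= 3 * vc_size E uV uE CV CE.
Proof.
move=> CE_ge0; rewrite /d_size ec_arc_sum /vc_size mulrDr.
set inner := \sum_u (_ + _ + _); have -> : inner = 3 * \sum_v (uV v)%:R * CV v.
  rewrite /inner mulr_sumr; apply: eq_bigr => v _.
  by rewrite !ec_fun_liftE !ec_lift_inner; ring.
rewrite lerD2l; under eq_bigr => u _ do under eq_bigr => z uz do
  rewrite ec_fun_liftE !(ec_lift_edge edge_card2) //.
have sumE_ge0 : 0 <= \sum_(e in E) (uE e)%:R * CE e.
  by apply: sumr_ge0 => e eE; rewrite mulr_ge0 ?CE_ge0.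
apply: le_trans (edge_sum_le edge_card2 (G := fun e => (uE e)%:R * CE e) _) _.
  by move=> e eE; rewrite mulr_ge0 ?CE_ge0.
by rewrite ler_wpM2r // ler_nat.
Qed.

Definition vc_cutV_of C (v : V) : R :=
  Num.max (Num.max (C (v, ec_in) (v, ec_mid)) (C (v, ec_mid) (v, ec_out)))
    (C (v, ec_in) (v, ec_out)).

Definition vc_cutE_of C (e : {set V}) : R :=
  \big[Num.max/0]_(p : V * V | [set p.1; p.2] == e) C (p.1, ec_out) (p.2, ec_in).

Lemma le_ec_lift_vc_cut_of C x y :
  ec_arc E x y -> C x y <= ec_lift (vc_cutV_of C) (vc_cutE_of C) x y.
Proof.
case: x y => [u i] [z j] /ec_arcP[[<- -> ->]|[<- -> ->]|[<- -> ->]|[-> -> uz]].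
- by rewrite ec_lift_inner !le_max lexx.
- by rewrite ec_lift_inner !le_max lexx orbT.
- by rewrite ec_lift_inner !le_max lexx orbT.
rewrite (ec_lift_edge edge_card2) //.
by apply: (le_bigmax_cond _ (j := (u, z)) (fun p => C (p.1, ec_out) (p.2, ec_in))).
Qed.

Lemma vc_cut_of_mcut H C :
  d_mcut (ec_arc E) H C -> vc_mcut E H (vc_cutV_of C) (vc_cutE_of C).
Proof.
move=> C_ok; split => [v | e eE].
  by do !apply: mcut_val_max; apply: C_ok;
    rewrite ?ec_arc_in_mid ?ec_arc_mid_out ?ec_arc_in_out.
apply: big_ind; [exact: mcut_val0 | exact: mcut_val_max | move=> [u z] /eqP /= uz_e].
by apply: C_ok; apply: ec_arc_edge; rewrite uz_e.
Qed.

Lemma vc_size_vc_cut_of_le (uV : V -> nat) (uE : {set V} -> nat) C :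
  (forall x y, ec_arc E x y -> 0 <= C x y) ->
  vc_size E uV uE (vc_cutV_of C) (vc_cutE_of C) <= d_size (ec_arc E) (ec_fun uV uE) C.
Proof.
move=> C_ge0; rewrite /vc_size /d_size ec_arc_sum; apply: lerD.
  apply: ler_sum => v _; rewrite !ec_fun_liftE !ec_lift_inner -!mulrDr ler_wpM2l //.
  have := C_ge0 _ _ (ec_arc_in_mid E v); have := C_ge0 _ _ (ec_arc_mid_out E v).
  have := C_ge0 _ _ (ec_arc_in_out E v); rewrite /vc_cutV_of !ge_max => *.
  by apply/andP; split; [apply/andP; split|]; lra.
rewrite (edge_partition E (fun p => (ec_fun uV uE (p.1, ec_out) (p.2, ec_in))%:R *
                                  C (p.1, ec_out) (p.2, ec_in))).
apply: ler_sum => e eE.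
have pair_arc (p : V * V) : [set p.1; p.2] == e -> ec_arc E (p.1, ec_out) (p.2, ec_in).
  by move=> /eqP pe; apply: ec_arc_edge; rewrite pe.
rewrite (eq_bigr (fun p => (uE e)%:R * C (p.1, ec_out) (p.2, ec_in))); last first.
  move=> [u z] /eqP /= uz_e.
  by rewrite ec_fun_liftE (ec_lift_edge edge_card2) ?uz_e.
rewrite -mulr_sumr ler_wpM2l //; apply: bigmax_le => [|p pe].
  by apply: sumr_ge0 => p /pair_arc /C_ge0.
by apply: ler_sum_term => // q /pair_arc /C_ge0.
Qed.

Lemma vc_dist0_ec (lV : V -> nat) (lE : {set V} -> nat) v w :
  vc_dist0 R E lV lE v w =
  d_dist (ec_arc E) (fun x y => (ec_fun lV lE x y)%:R) (v, ec_mid) (w, ec_mid).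
Proof.
rewrite (_ : (fun x y => _) = ec_lift (fun v => (lV v)%:R) (fun e => (lE e)%:R)).
  exact: (vc_dist_ec_lift edge_card2).
by apply: funext => x; apply: funext => y; exact: ec_fun_liftE.
Qed.

Lemma vc_distC_ec_lift (lV : V -> nat) (lE : {set V} -> nat) H CV CE v w :
  (forall v, 0 <= CV v) -> (forall e, e \in E -> 0 <= CE e) ->
  vc_distC E lV lE H CV CE v w =
  d_dist (ec_arc E) (fun x y => (ec_fun lV lE x y)%:R + H%:R * ec_lift CV CE x y)
    (v, ec_mid) (w, ec_mid).
Proof.
move=> CV_ge0 CE_ge0.
rewrite (_ : (fun x y => _) = ec_lift (fun v => (lV v)%:R + H%:R * CV v)
                                      (fun e => (lE e)%:R + H%:R * CE e)).
  apply: (vc_dist_ec_lift edge_card2) => [u|e eE]; apply: addr_ge0; rewrite // mulr_ge0 //.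
  exact: CE_ge0.
by apply: funext => x; apply: funext => y; rewrite ec_liftDM ec_fun_liftE.
Qed.

Lemma ec_distC_le_vc_distC (lV : V -> nat) (lE : {set V} -> nat) (H : nat) C v w :
  (d_dist (ec_arc E) (fun x y => (ec_fun lV lE x y)%:R + H%:R * C x y)%R
     (v, ec_mid) (w, ec_mid)
   <= vc_distC E lV lE H (vc_cutV_of C) (vc_cutE_of C) v w)%E.
Proof.
apply: (ec_dist_le_vc_dist edge_card2) => x y xy.
by rewrite ec_liftDM ec_fun_liftE lerD2l ler_wpM2l ?le_ec_lift_vc_cut_of.
Qed.

End CutTransfer.

Section SparsityTransfer.
Variables (R : realType) (V : finType) (E : {set {set V}}).
Hypothesis edge_card2 : forall e, e \in E -> #|e| = 2%N.
Variables (lV uV : V -> nat) (lE uE : {set V} -> nat) (A : V -> R) (h s : nat).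
Local Notation W := (V * 'I_3)%type.

Lemma vc_to_ec_sparsity phi CV CE :
  vc_mcut E (h * s) CV CE -> (vc_spars E lV uV lE uE A h s CV CE < phi%:E)%E ->
  exists C' : W -> W -> R, d_mcut (ec_arc E) (h * s) C' /\
    (d_spars (ec_arc E) (ec_fun lV lE) (ec_fun uV uE) (ec_weight A) h s C'
       < (3 * phi)%:E)%E.
Proof.
move=> [CV_ok CE_ok] /spars_hs_lt_demand[D [hD hresp hlen _] [sep_gt0 hphi]].
have CV_ge0 v : 0 <= CV v := mcut_val_ge0 (CV_ok v).
have CE_ge0 e : e \in E -> 0 <= CE e := fun eE => mcut_val_ge0 (CE_ok e eE).
exists (ec_lift CV CE); split; first exact: ec_lift_mcut.
set D' := ec_demand (sym_demand D).
have hD' : demand D' by apply/demand_ec_demand/demand_sym.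
have hresp' : respecting (ec_weight A) D'.
  by apply/respecting_ec_demand/respecting_sym.
have hlen' : hlength (d_dist (ec_arc E) (fun x y => (ec_fun lV lE x y)%:R)) h D'.
  apply/hlength_ec_demand; apply: hlength_le (hlength_sym _ hD hlen).
    by move=> v w; rewrite vc_dist0_ec.
  by move=> v w; exact: vc_dist_sym.
have hsym' : symmetric_demand D' by apply/symmetric_ec_demand/symmetric_sym_demand.
apply: le_lt_trans (spars_hs_le_ratio _ _ _ hD' hresp' hlen' (fun=> hsym')) _.
apply: ratio_lt_scale sep_gt0 _ hphi => //.
- exact: d_size_ge0 (ec_lift_ge0 edge_card2 CV_ge0 CE_ge0).
- exact: d_size_ec_lift_le.
rewrite sep_ec_demand -(@sep_sym _ _ _ _ D); last by move=> v w; exact: vc_dist_sym.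
by apply: le_sep (demand_sym hD) _ => v w; rewrite vc_distC_ec_lift.
Qed.

Lemma ec_to_vc_sparsity phi (C : W -> W -> R) :
  d_mcut (ec_arc E) (h * s) C ->
  (d_spars (ec_arc E) (ec_fun lV lE) (ec_fun uV uE) (ec_weight A) h s C < phi%:E)%E ->
  exists CV CE, vc_mcut E (h * s) CV CE /\
    (vc_spars E lV uV lE uE A h s CV CE < phi%:E)%E.
Proof.
move=> C_ok /spars_hs_lt_demand[D' [hD' hresp hlen _] [sep_gt0 hphi]].
have C_ge0 x y : ec_arc E x y -> 0 <= C x y := fun xy => mcut_val_ge0 (C_ok x y xy).
have [cutV_ok cutE_ok] := vc_cut_of_mcut C_ok.
exists (vc_cutV_of C), (vc_cutE_of C); split => //.
have D'E := ec_demandE hD' hresp.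
move: hresp hlen sep_gt0 hphi; rewrite D'E sep_ec_demand.
move=> /respecting_ec_demand hresp /hlength_ec_demand hlen sep_gt0 hphi.
have hD : demand (fun v w => D' (v, ec_mid) (w, ec_mid)) by move=> v w; exact: hD'.
have hlen_vc : hlength (vc_dist0 R E lV lE) h (fun v w => D' (v, ec_mid) (w, ec_mid)).
  by apply: hlength_le hlen => v w; rewrite vc_dist0_ec.
rewrite /vc_spars; apply: le_lt_trans (spars_hs_le_ratio _ _ _ hD hresp hlen_vc _) _ => //.
rewrite -[phi]mul1r; apply: ratio_lt_scale sep_gt0 _ hphi => //.
- apply: vc_size_ge0 => [v|e eE]; first exact: mcut_val_ge0 (cutV_ok v).
  exact: mcut_val_ge0 (cutE_ok e eE).
- by rewrite mul1r; exact: vc_size_vc_cut_of_le.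
exact: le_sep (fun v w => ec_distC_le_vc_distC edge_card2 _ _ _ _ v w).
Qed.

End SparsityTransfer.

Theorem lemma4p8 (R : realType) (V : finType) (E : {set {set V}})
  (lV uV : V -> nat) (lE uE : {set V} -> nat) (A : V -> R) (h s : nat) (phi : R)
  (hE : forall e, e \in E -> (#|e| = 2)%N)
  (hlV : forall v, (0 < lV v)%N) (huV : forall v, (0 < uV v)%N)
  (hlE : forall e, e \in E -> (0 < lE e)%N)
  (huE : forall e, e \in E -> (0 < uE e)%N)
  (hA : forall v, 0 <= A v) (hh : (0 < h)%N) (hs : (0 < s)%N) :
  ((exists (CV : V -> R) (CE : {set V} -> R),
      vc_mcut E (h * s) CV CE /\
      (vc_spars E lV uV lE uE A h s CV CE < phi%:E)%E) ->
   exists C' : V * 'I_3 -> V * 'I_3 -> R,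
      d_mcut (ec_arc E) (h * s) C' /\
      (d_spars (ec_arc E) (ec_fun lV lE) (ec_fun uV uE) (ec_weight A) h s C'
         < (3 * phi)%:E)%E)
  /\
  ((exists C' : V * 'I_3 -> V * 'I_3 -> R,
      d_mcut (ec_arc E) (h * s) C' /\
      (d_spars (ec_arc E) (ec_fun lV lE) (ec_fun uV uE) (ec_weight A) h s C'
         < phi%:E)%E) ->
   exists (CV : V -> R) (CE : {set V} -> R),
      vc_mcut E (h * s) CV CE /\
      (vc_spars E lV uV lE uE A h s CV CE < phi%:E)%E).
Proof.
split=> [[CV [CE [C_ok hphi]]] | [C' [C'_ok hphi]]].
- exact: (vc_to_ec_sparsity hE C_ok hphi).
- exact: (ec_to_vc_sparsity hE C'_ok hphi).
Qed.
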